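(* Let $n \geq 9$ and $P \in \mathrm{PLS}(2,3;n)$. Then $P$ has a proper reduction (i.e. $P$ is reducible) if and only if $P$ is not completely reduced.
   Context: $\mathrm{PLS}(2,3;n)$ denotes the set of $n\times n$ partial Latin squares on symbols $\{1,\dots,n\}$ (each cell empty or containing one symbol, no symbol repeated in a row or column) in which rows $1,2$ and columns $1,2,3$ are completely filled and all other cells are empty. Write $R_i$ for row $i$ and $C_j$ for column $j$ of $P$. Compositions: for columns $C_j, C_k$ and $l\le 2$, $C_j \circ_l C_k$ is the column identical to $C_j$ except that its entry in row $l$ is $P(l,k)$. For rows $R_j,R_i$ and $l \le 3$, $R_j \circ_l R_i$ is the row identical to $R_j$ except that its entry in column $l$ is $P(i,l)$. An array line is called Latin if it contains no repeated symbol. Replacement: let $\alpha$ be a symbol not occurring in the $2\times 3$ subarray in the upper left corner of $P$, and let $j,k,l,q,r$ be such that $P(j,1)=P(k,2)=P(l,3)=P(1,q)=P(2,r)=\alpha$. A row $R_i$ with $i \in \{3,\dots,n\}$ replaces $\alpha$ if $R_j\circ_1 R_i$, $R_k \circ_2 R_i$ and $R_l \circ_3 R_i$ are all Latin. A column $C_p$ with $p\in\{4,\dots,n\}$ replaces $\alpha$ if $C_q \circ_1 C_p$ and $C_r \circ_2 C_p$ are both Latin; $C_p$ replaces itself if moreover $p \in \{q,r\}$. $P$ is reducible (has a proper reduction) if there exist such a symbol $\alpha$, a row replacing $\alpha$, and a column replacing $\alpha$ and itself. Cycle types: the $(1,2)$-row-permutation of $P$ is the permutation $\sigma$ of $\{1,\dots,n\}$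 with $\sigma(P(1,i))=P(2,i)$ for all $i$. For a cycle $(a_1\,a_2\,\dots\,a_m)$ in the disjoint cycle representation of $\sigma$, its cycle type is the $0/1$ sequence of length $m$ whose $i$th entry is $1$ if $a_i \in \{P(1,1),P(1,2),P(1,3)\}$ and $0$ otherwise. Two sequences are equivalent if one is obtained from the other by a cyclic permutation. $P$ is completely reduced if the cycle type of every cycle of $\sigma$ is equivalent to one of: $00$, $01$, $11$, $101$, $111$, $1010$, $1110$, $10101$, $101010$. *)

(* Conventions: rows, columns and symbols are 0-indexed,
   i.e. the paper's row/column/symbol k corresponds to index k-1 here;
   symbols {1..n} are represented by 'I_n. *)
From mathcomp Require Import all_boot.
Set Implicit Arguments. Unset Strict Implicit. Unset Printing Implicit Defensive.

Definition array (n : nat) := 'I_n -> 'I_n -> option 'I_n.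

(* Cell access with natural-number indices (out of range cells are empty). *)
Definition cell n (P : array n) (i j : nat) : option 'I_n :=
  match (insub i : option 'I_n), (insub j : option 'I_n) with
  | Some i', Some j' => P i' j'
  | _, _ => None
  end.

Definition row n (P : array n) (i : nat) : nat -> option 'I_n := fun c => cell P i c.
Definition col n (P : array n) (j : nat) : nat -> option 'I_n := fun r => cell P r j.

Definition latin T (L : nat -> option T) : Prop :=
  forall a b, a <> b -> L a = L b -> L a = None.

Definition is_PLS23 n (P : array n) : Prop :=
  (forall i j : 'I_n, P i j <> None <-> (val i < 2 \/ val j < 3)) /\
  (forall i, latin (row P i)) /\ (forall j, latin (col P j)).

(* C_j o_l C_k : column j with its entry in row l replaced by P(l,k). *)
Definition compC n (P : array n) (j l k : nat) : nat -> option 'I_n :=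
  fun r => if r == l then cell P l k else cell P r j.

(* R_j o_l R_i : row j with its entry in column l replaced by P(i,l). *)
Definition compR n (P : array n) (j l i : nat) : nat -> option 'I_n :=
  fun c => if c == l then cell P i l else cell P j c.

Definition avoids_corner n (P : array n) (a : 'I_n) : Prop :=
  forall i j, i < 2 -> j < 3 -> cell P i j <> Some a.

Definition row_replaces n (P : array n) (a : 'I_n) (i : nat) : Prop :=
  2 <= i < n /\
  exists j k l, cell P j 0 = Some a /\ cell P k 1 = Some a /\ cell P l 2 = Some a /\
                 latin (compR P j 0 i) /\ latin (compR P k 1 i) /\ latin (compR P l 2 i).

Definition col_replaces n (P : array n) (a : 'I_n) (p : nat) : Prop :=
  3 <= p < n /\
  exists q r, [/\ cell P 0 q = Some a, cell P 1 r = Some a,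
                 latin (compC P q 0 p) & latin (compC P r 1 p)].

Definition col_replaces_itself n (P : array n) (a : 'I_n) (p : nat) : Prop :=
  col_replaces P a p /\
  exists q r, [/\ cell P 0 q = Some a, cell P 1 r = Some a & (p = q \/ p = r)].

Definition reducible n (P : array n) : Prop :=
  exists a : 'I_n, [/\ avoids_corner P a,
    (exists i, row_replaces P a i) &
    (exists p, col_replaces_itself P a p)].

(* The (1,2)-row-permutation sigma: sigma(P(1,c)) = P(2,c). *)
Definition sigma n (P : array n) (s : 'I_n) : 'I_n :=
  match [pick c : 'I_n | cell P 0 c == Some s] with
  | Some c => odflt s (cell P 1 c)
  | None => s
  end.

Definition top3 n (P : array n) : seq (option 'I_n) :=
  [:: cell P 0 0; cell P 0 1; cell P 0 2].

Definition cycle_type n (P : array n) (x : 'I_n) : seq bool :=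
  [seq (Some a \in top3 P) | a <- orbit (sigma P) x].

Definition cyc_equiv (s t : seq bool) : Prop := exists k, rot k s = t.

Definition allowed_types : seq (seq bool) :=
  [:: [:: false; false]; [:: false; true]; [:: true; true];
      [:: true; false; true]; [:: true; true; true];
      [:: true; false; true; false]; [:: true; true; true; false];
      [:: true; false; true; false; true];
      [:: true; false; true; false; true; false]].

Definition completely_reduced n (P : array n) : Prop :=
  forall x : 'I_n, exists2 t, t \in allowed_types & cyc_equiv (cycle_type P x) t.

From mathcomp Require Import all_boot zify.
Set Implicit Arguments. Unset Strict Implicit. Unset Printing Implicit Defensive.

(* Call a symbol marked if it is one of P(1,1), P(1,2), P(1,3).  The permutation
   sigma has no fixed points, and a cycle type has at most three 1s.  A cyclic
   0/1 word of length at least 3 is equivalent to an allowed type exactly when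
   no two cyclically adjacent letters are 0; such a word with at most three 1s
   has length at most 7, so this is a finite check.  Hence P is not completely
   reduced iff some y with sigma^2(y) <> y has y and sigma(y) unmarked.
   Given such y, alpha = sigma(y) avoids the corner; the column of alpha in
   row 1 replaces alpha and itself, because the column holding y above alpha is
   empty below row 2 and sigma(alpha) <> y; and some row replaces alpha, because
   each of the six values it must avoid in its first three cells occurs at most
   once in the relevant column, while n - 2 >= 7 rows are available.
   Conversely, a column replacing alpha and itself exhibits y, alpha,
   sigma(alpha) with y <> sigma(alpha). *)

Lemma uniq_count_mem_leq (T : eqType) (S s : seq T) :
  uniq s -> count (mem S) s <= size S.
Proof.
move=> s_uniq; rewrite -size_filter; apply: uniq_leq_size; first exact: filter_uniq.
by move=> x; rewrite mem_filter => /andP[].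
Qed.

Lemma count_or3_leq (T : Type) (a b c : pred T) (s : seq T) :
  count (fun x => [|| a x, b x | c x]) s <= count a s + count b s + count c s.
Proof. by elim: s => //= x s IH; case: (a x) (b x) (c x) => [] [] [] /=; lia. Qed.

Lemma cycle_orbitE (T : finType) (f : T -> T) (e : rel T) (x : T) :
  injective f -> cycle e (orbit f x) = all (fun y => e y (f y)) (orbit f x).
Proof.
move=> f_inj; have f_cycle := cycle_orbit f_inj x.
apply/idP/allP => [e_cycle y y_x | e_f].
  by rewrite -(nextE f_cycle y_x); apply: next_cycle.
by apply: cycle_from_next (orbit_uniq f x) _ => y y_x; rewrite (nextE f_cycle y_x) e_f.
Qed.

Lemma order_le2 (T : finType) (f : T -> T) (y : T) : f (f y) = y -> order f y <= 2.
Proof.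
move=> ffy; apply: (@order_le_cycle _ f [:: y; f y]); last exact: mem_head.
by rewrite /= ffy !eqxx.
Qed.

Lemma path_orb_size (b : bool) (s : seq bool) :
  path orb b s -> (size s).+1 <= (count id (b :: s)).*2 + ~~ b.
Proof.
elim: s b => [|c s IH] b /=; first by case: b.
case/andP=> bc /IH; case: b bc; case: c => //= _; lia.
Qed.

Lemma cycle_orb_size (s : seq bool) : cycle orb s -> size s <= (count id s).*2.+1.
Proof.
case: s => [|b s] //=; rewrite rcons_path => /andP[/path_orb_size].
case: b => /=; lia.
Qed.

Fixpoint bool_seqs (m : nat) : seq (seq bool) :=
  if m is m'.+1 then
    [seq true :: s | s <- bool_seqs m'] ++ [seq false :: s | s <- bool_seqs m']
  else [:: [::]].

Lemma mem_bool_seqs (s : seq bool) : s \in bool_seqs (size s).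
Proof.
by elim: s => [|b s IH] //=; case: b; rewrite mem_cat map_f ?orbT.
Qed.

Lemma allowed_types_cycle :
  all (fun t => (2 < size t) ==> cycle orb t) allowed_types.
Proof. by []. Qed.

Lemma short_cycle_types_allowed :
  all (fun m => all (fun s => (count id s <= 3) ==> ((2 < size s) ==> cycle orb s) ==>
         has (fun k => rot k s \in allowed_types) (iota 0 m)) (bool_seqs m))
      (iota 2 6).
Proof. by vm_compute. Qed.

Lemma allowed_typeP (s : seq bool) : 1 < size s -> count id s <= 3 ->
  (exists2 t, t \in allowed_types & cyc_equiv s t) <-> (2 < size s -> cycle orb s).
Proof.
move=> s_gt1 s_le3; split => [[t t_allowed [k s_t]] | s_cycle].
  rewrite -(size_rot k) -(rot_cycle k) s_t; apply/implyP.
  exact: (allP allowed_types_cycle).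
have s_le7 : size s <= 7.
  by case: (ltnP 2 (size s)) => [/s_cycle/cycle_orb_size|]; lia.
have /allP/(_ (size s)) := short_cycle_types_allowed.
rewrite mem_iota => /(_ ltac:(lia)) /allP/(_ s (mem_bool_seqs s)).
rewrite s_le3 implyTb => /implyP/(_ (introT implyP s_cycle)).
by case/hasP => k _ s_k; exists (rot k s) => //; exists k.
Qed.

Lemma latin_Some_inj (T : Type) (L : nat -> option T) (a b : nat) (v : T) :
  latin L -> L a = Some v -> L b = Some v -> a = b.
Proof.
move=> L_latin La Lb; case: (eqVneq a b) => // /eqP ab.
by have := L_latin a b ab; rewrite La Lb => /(_ erefl).
Qed.

Lemma eq_latin (T : Type) (L L' : nat -> option T) : L =1 L' -> latin L' -> latin L.
Proof. by move=> eL L'_latin a b ab; rewrite !eL; apply: L'_latin. Qed.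

Lemma latin_prefix (T : eqType) (m : nat) (L : nat -> option T) :
  (forall k, m <= k -> L k = None) -> uniq [seq L k | k <- iota 0 m] -> latin L.
Proof.
move=> L_none L_uniq a b ab Lab.
case: (leqP m a) => [/L_none //|a_lt]; case: (leqP m b) => [/L_none|b_lt].
  by rewrite Lab.
have := nth_uniq None _ _ L_uniq; rewrite size_map size_iota => /(_ a b a_lt b_lt).
by rewrite !(nth_map 0) ?size_iota // !nth_iota // Lab eqxx => /esym/eqP.
Qed.

Lemma latin_onto (n : nat) (L : nat -> option 'I_n) :
  latin L -> (forall c, c < n -> L c != None) -> forall v, exists2 c, c < n & L c = Some v.
Proof.
move=> L_latin L_filled v.
pose f (c : 'I_n) := odflt c (L c).
have Lf (c : 'I_n) : L c = Some (f c).
  by rewrite /f; move: (L_filled c (ltn_ord c)); case: (L c).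
have f_inj : injective f.
  by move=> c c' fc; apply/val_inj/(latin_Some_inj L_latin (Lf c)); rewrite fc Lf.
have [g _ gK] := injF_bij f_inj.
by exists (g v) => //; rewrite Lf gK.
Qed.

Lemma map_latin_uniq (T : eqType) (L : nat -> option T) (s : seq nat) :
  latin L -> {in s, forall k, L k != None} -> uniq s -> uniq (map L s).
Proof.
move=> L_latin L_filled s_uniq; rewrite map_inj_in_uniq // => a b /L_filled.
by case La: (L a) => [v|] // _ _ Lab; apply: latin_Some_inj L_latin La _; rewrite -Lab.
Qed.

(* [y] followed by [sigma P y] is an occurrence of 00 in a cycle type of
   length at least 3. *)
Definition unmarked_run (n : nat) (P : array n) (y : 'I_n) : bool :=
  [&& Some y \notin top3 P, Some (sigma P y) \notin top3 P & sigma P (sigma P y) != y].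

Section PLS23.

Variables (n : nat) (P : array n).

Lemma cell_Some_lt i j v : cell P i j = Some v -> i < n /\ j < n.
Proof.
by rewrite /cell; case: insubP => [i' /= _ <-|] //; case: insubP => [j' /= _ <-|] //.
Qed.

Lemma top3P v : reflect (exists2 j, j < 3 & cell P 0 j = Some v) (Some v \in top3 P).
Proof.
rewrite !inE; apply: (iffP or3P) => [|[[|[|[|j]]] // _ <-]].
- by case=> /eqP ->; [exists 0 | exists 1 | exists 2].
- exact: Or31.
- exact: Or32.
- exact: Or33.
Qed.

Lemma unmarked_col_gt2 v c : Some v \notin top3 P -> cell P 0 c = Some v -> 2 < c.
Proof.
rewrite ltnNge => /negP v_unmarked v_c; apply/negP => c3.
by apply/v_unmarked/top3P; exists c.
Qed.

Hypothesis P_pls : is_PLS23 P.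
Hypothesis n_gt2 : 2 < n.

Lemma cell_filled i j : i < n -> j < n -> i < 2 \/ j < 3 -> cell P i j != None.
Proof.
move=> i_lt j_lt ij; rewrite /cell !insubT; apply/eqP.
by apply: (proj2 (P_pls.1 (Ordinal i_lt) (Ordinal j_lt))).
Qed.

Lemma top_cell_Some i c : i < 2 -> c < n -> exists v, cell P i c = Some v.
Proof.
move=> i2 c_lt; have i_lt : i < n by apply: leq_trans n_gt2; lia.
by case: (cell P i c) (cell_filled i_lt c_lt (or_introl i2)) => [v|] // _; exists v.
Qed.

Lemma cell_empty i j : 1 < i -> 2 < j -> cell P i j = None.
Proof.
rewrite /cell; case: insubP => [i' _ <-|] //; case: insubP => [j' _ <-|] // i2 j3.
case Pij: (P i' j') => // [v].
have /(P_pls.1 i' j').1 : P i' j' <> None by rewrite Pij.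
by move: (val i') (val j') i2 j3 => a b; lia.
Qed.

Lemma row_cell_inj i a b v : cell P i a = Some v -> cell P i b = Some v -> a = b.
Proof. exact: (latin_Some_inj (P_pls.2.1 i)). Qed.

Lemma col_cell_inj j a b v : cell P a j = Some v -> cell P b j = Some v -> a = b.
Proof. exact: (latin_Some_inj (P_pls.2.2 j)). Qed.

Lemma row_onto i : i < 2 -> forall v, exists2 c, c < n & cell P i c = Some v.
Proof.
move=> i2; apply: latin_onto; first exact: P_pls.2.1.
by move=> c c_lt; apply: cell_filled; [lia | | left].
Qed.

Lemma col_onto j : j < 3 -> forall v, exists2 r, r < n & cell P r j = Some v.
Proof.
move=> j3; apply: latin_onto; first exact: P_pls.2.2.
by move=> r r_lt; apply: cell_filled; [| lia | right].
Qed.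

Lemma corner_row_uniq i : i < n -> uniq [:: cell P i 0; cell P i 1; cell P i 2].
Proof.
move=> i_lt; apply: (map_latin_uniq (L := row P i) (s := iota 0 3)) => //.
  exact: P_pls.2.1.
by move=> c; rewrite mem_iota => c3; apply: cell_filled; [| lia | right].
Qed.

Lemma count_col_mem c (S : seq (option 'I_n)) (s : seq nat) :
  c < 3 -> uniq s -> {in s, forall r, r < n} ->
  count (fun r => cell P r c \in S) s <= size S.
Proof.
move=> c3 s_uniq s_lt; rewrite -(count_map (col P c) (mem S)).
apply/uniq_count_mem_leq/map_latin_uniq => //; first exact: P_pls.2.2.
by move=> r /s_lt r_lt; apply: cell_filled; [| lia | right].
Qed.

Lemma sigmaE c y z : cell P 0 c = Some y -> cell P 1 c = Some z -> sigma P y = z.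
Proof.
move=> y_c z_c; rewrite /sigma; case: pickP => [c' /eqP y_c'|no_c].
  by rewrite (row_cell_inj y_c' y_c) z_c.
have [_ c_lt] := cell_Some_lt y_c.
by have := no_c (Ordinal c_lt); rewrite /= y_c eqxx.
Qed.

Lemma sigma_col y : exists2 c, cell P 0 c = Some y & cell P 1 c = Some (sigma P y).
Proof.
have [c c_lt y_c] := row_onto (isT : 0 < 2) y.
have [z z_c] := top_cell_Some (isT : 1 < 2) c_lt.
by exists c; rewrite // (sigmaE y_c z_c).
Qed.

Lemma sigma_inj : injective (sigma P).
Proof.
move=> y y' e; have [c y_c sy_c] := sigma_col y; have [c' y'_c' sy'_c'] := sigma_col y'.
rewrite e in sy_c; rewrite (row_cell_inj sy_c sy'_c') y'_c' in y_c.
by case: y_c.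
Qed.

Lemma sigma_moves y : sigma P y != y.
Proof.
by apply/eqP => sy; have [c y_c] := sigma_col y; rewrite sy => /(col_cell_inj y_c).
Qed.

Lemma order_sigma_gt1 x : 1 < order (sigma P) x.
Proof.
rewrite ltn_neqAle order_gt0 andbT eq_sym; apply/eqP => order1.
by have := iter_order sigma_inj x; rewrite order1; apply/eqP/sigma_moves.
Qed.

Lemma size_cycle_type x : size (cycle_type P x) = order (sigma P) x.
Proof. by rewrite size_map size_orbit. Qed.

Lemma count_cycle_type x : count id (cycle_type P x) <= 3.
Proof.
rewrite count_map -(count_map Some (mem (top3 P))).
by apply/uniq_count_mem_leq; rewrite (map_inj_uniq Some_inj) orbit_uniq.
Qed.

Lemma cycle_type_cycleE x :
  cycle orb (cycle_type P x) =
  all (fun y => (Some y \in top3 P) || (Some (sigma P y) \in top3 P)) (orbit (sigma P) x).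
Proof. by rewrite cycle_map cycle_orbitE //; apply: sigma_inj. Qed.

Lemma completely_reducedP : completely_reduced P <-> [forall y, ~~ unmarked_run P y].
Proof.
have type_allowedP x : (exists2 t, t \in allowed_types & cyc_equiv (cycle_type P x) t) <->
    (2 < order (sigma P) x -> cycle orb (cycle_type P x)).
  rewrite -size_cycle_type; apply: allowed_typeP; last exact: count_cycle_type.
  by rewrite size_cycle_type order_sigma_gt1.
split => [CR | /forallP no_run x].
  apply/forallP => y; apply/and3P => [[y_unmarked sy_unmarked ssy]].
  have y_order : 2 < order (sigma P) y.
    rewrite ltn_neqAle order_sigma_gt1 andbT; apply: contra ssy => /eqP order2.
    by have := iter_order sigma_inj y; rewrite -order2 => /= ->.
  have := (type_allowedP y).1 (CR y).
  rewrite cycle_type_cycleE => /(_ y_order)/allP/(_ y (in_orbit _ y)).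
  by rewrite (negbTE y_unmarked) (negbTE sy_unmarked).
apply/type_allowedP; rewrite cycle_type_cycleE => x_order; apply/allP => y y_x.
apply: contraR (no_run y) => /norP[y_unmarked sy_unmarked].
rewrite /unmarked_run y_unmarked sy_unmarked; apply/eqP => /order_le2.
by rewrite (eq_order_cycle (cycle_orbit sigma_inj x) (in_orbit _ x) y_x); lia.
Qed.

Lemma reducible_unmarked_run : reducible P -> exists y, unmarked_run P y.
Proof.
case=> a [a_avoids _ [p [[_ [q' [r' [a_q' a_r' latin_q latin_r]]]] [q [r [a_q a_r pqr]]]]]].
rewrite -(row_cell_inj a_q a_q') in latin_q; rewrite -(row_cell_inj a_r a_r') in latin_r.
have [_ q_lt] := cell_Some_lt a_q; have [_ r_lt] := cell_Some_lt a_r.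
have [y y_r] := top_cell_Some (isT : 0 < 2) r_lt.
have [z z_q] := top_cell_Some (isT : 1 < 2) q_lt.
exists y; rewrite /unmarked_run (sigmaE y_r a_r) (sigmaE a_q z_q).
apply/and3P; split.
- apply/top3P => [[j j3 y_j]]; apply: (a_avoids 1 j) => //.
  by rewrite (row_cell_inj y_j y_r).
- by apply/top3P => [[j j3 a_j]]; apply: (a_avoids 0 j).
- apply/eqP => zy; case: pqr => p_eq.
    by have := latin_r 0 1 (n_Sn 0); rewrite /compC /= y_r p_eq z_q zy => /(_ erefl).
  by have := latin_q 0 1 (n_Sn 0); rewrite /compC /= p_eq y_r z_q zy => /(_ erefl).
Qed.

Lemma compR_latin j c i : 1 < j -> c < 3 ->
  uniq [seq compR P j c i k | k <- iota 0 3] -> latin (compR P j c i).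
Proof.
move=> j2 c3; apply: latin_prefix => k k3.
by rewrite /compR ifN; [apply: cell_empty | rewrite neq_ltn orbC]; lia.
Qed.

Lemma avoids_corner_row_replaces a :
  8 < n -> avoids_corner P a -> exists i, row_replaces P a i.
Proof.
move=> n_gt8 a_avoids.
have a_col c : c < 3 -> exists2 j, 1 < j < n & cell P j c = Some a.
  move=> c3; have [j j_lt a_j] := col_onto c3 a; exists j => //.
  by rewrite j_lt andbT ltnNge; apply/negP => j2; apply: (a_avoids j c).
have [j /andP[j2 j_lt] a_j] := a_col 0 isT.
have [k /andP[k2 k_lt] a_k] := a_col 1 isT.
have [l /andP[l2 l_lt] a_l] := a_col 2 isT.
pose clash i := [|| cell P i 0 \in [:: cell P j 1; cell P j 2],
                    cell P i 1 \in [:: cell P k 0; cell P k 2]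
                  | cell P i 2 \in [:: cell P l 0; cell P l 1]].
have rows_uniq := iota_uniq 2 (n - 2).
have rows_lt : {in iota 2 (n - 2), forall i, i < n} by move=> i; rewrite mem_iota; lia.
have clash_le6 : count clash (iota 2 (n - 2)) <= 6.
  apply: leq_trans (count_or3_leq _ _ _ _) _.
  have := count_col_mem [:: cell P j 1; cell P j 2] (isT : 0 < 3) rows_uniq rows_lt.
  have := count_col_mem [:: cell P k 0; cell P k 2] (isT : 1 < 3) rows_uniq rows_lt.
  have := count_col_mem [:: cell P l 0; cell P l 1] (isT : 2 < 3) rows_uniq rows_lt.
  by rewrite /=; lia.
have : has (predC clash) (iota 2 (n - 2)).
  by rewrite has_count; have := count_predC clash (iota 2 (n - 2)); rewrite size_iota; lia.
case/hasP => i; rewrite mem_iota => /andP[i2 i_lt] /norP[clash0 /norP[clash1 clash2]].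
exists i; split; first lia.
exists j, k, l; do 3!split=> //.
have /and3P[_ /norP[j12 _] _] := corner_row_uniq j_lt.
have /and3P[/norP[_ /norP[k02 _]] _ _] := corner_row_uniq k_lt.
have /and3P[/norP[l01 _] _ _] := corner_row_uniq l_lt.
split; [|split]; apply: compR_latin => //=; rewrite /compR /= !inE.
- by move: clash0; rewrite !inE => /norP[/negbTE -> /negbTE ->]; rewrite j12.
- rewrite (negbTE k02) !(eq_sym _ (cell P i 1)).
  by move: clash1; rewrite !inE => /norP[/negbTE -> /negbTE ->].
- rewrite (negbTE l01) !(eq_sym _ (cell P i 2)).
  by move: clash2; rewrite !inE => /norP[/negbTE -> /negbTE ->].
Qed.

Section UnmarkedRun.

Variable y : 'I_n.
Hypothesis y_run : unmarked_run P y.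

Lemma unmarked_run_avoids_corner : avoids_corner P (sigma P y).
Proof.
case/and3P: y_run => y_unmarked sy_unmarked _ [|[|i]] // j _ j3 sy_j.
  by move/negP: sy_unmarked; apply; apply/top3P; exists j.
have [_ j_lt] := cell_Some_lt sy_j.
have [w w_j] := top_cell_Some (isT : 0 < 2) j_lt.
move/negP: y_unmarked; apply; apply/top3P; exists j => //.
by rewrite w_j (sigma_inj (sigmaE w_j sy_j)).
Qed.

Lemma unmarked_run_col_replaces : exists p, col_replaces_itself P (sigma P y) p.
Proof.
case/and3P: y_run => y_unmarked sy_unmarked ssy.
have [q q_lt sy_q] := row_onto (isT : 0 < 2) (sigma P y).
have [r y_r sy_r] := sigma_col y.
have q_gt2 := unmarked_col_gt2 sy_unmarked sy_q.
have r_gt2 := unmarked_col_gt2 y_unmarked y_r.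
have [z z_q] := top_cell_Some (isT : 1 < 2) q_lt.
exists q; split; last by exists q, r; split => //; left.
split; first by rewrite q_gt2.
exists q, r; split => //.
  by apply: (eq_latin (L' := col P q)); [case=> [|i] | exact: P_pls.2.2].
apply: (latin_prefix (m := 2)) => [k k2|].
  by rewrite /compC ifN; [apply: cell_empty | rewrite neq_ltn orbC]; lia.
by rewrite /= /compC /= y_r z_q andbT inE -(sigmaE sy_q z_q) eq_sym.
Qed.

Lemma unmarked_run_reducible : 8 < n -> reducible P.
Proof.
move=> n_gt8; exists (sigma P y); split; first exact: unmarked_run_avoids_corner.
  exact: avoids_corner_row_replaces unmarked_run_avoids_corner.
exact: unmarked_run_col_replaces.
Qed.

End UnmarkedRun.

End PLS23.

Theorem theorem6 (n : nat) (P : array n) :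
  9 <= n -> is_PLS23 P -> (reducible P <-> ~ completely_reduced P).
Proof.
move=> n_ge9 P_pls; have n_gt2 : 2 < n by apply: leq_trans n_ge9.
rewrite (completely_reducedP P_pls n_gt2); split.
  by case/(reducible_unmarked_run P_pls n_gt2) => y y_run /forallP/(_ y); rewrite y_run.
move/negP; rewrite negb_forall => /existsP[y]; rewrite negbK => y_run.
exact: (unmarked_run_reducible P_pls n_gt2 y_run).
Qed.
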